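(* Let $\Lambda,\Gamma$ be row-finite $k$-graphs and let $p:\Lambda\to\Gamma$ be a surjective $k$-graph morphism with $r$-path lifting. If $\Gamma$ is aperiodic, then $\Lambda$ is aperiodic.
   Context: A $k$-graph is a countable category $\Lambda$ with a functor $d:\Lambda\to\mathbb{N}^k$ with unique factorisation. $\Lambda^n=d^{-1}(n)$, $\Lambda^0$ = vertices, $v\Lambda=\{\lambda:r(\lambda)=v\}$; row-finite: $v\Lambda^n$ finite. A $k$-graph morphism is a degree-preserving functor. A surjective $k$-graph morphism $p:\Lambda\to\Gamma$ has $r$-path lifting if for all $v\in\Lambda^0$ and $\lambda\in p(v)\Gamma$ there is $\lambda'\in v\Lambda$ with $p(\lambda')=\lambda$. For $\lambda$ and $m\le n\le d(\lambda)$, $\lambda(m,n)$ is the unique path of degree $n-m$ with $\lambda=\lambda'\lambda(m,n)\lambda''$ and $d(\lambda')=m$. A $k$-graph $\Lambda$ is aperiodic if for every $v\in\Lambda^0$ and all $m\ne n\in\mathbb{N}^k$ there is $\lambda\in v\Lambda$ with $d(\lambda)\ge m\vee n$ and $\lambda(m,m+d(\lambda)-(m\vee n))\ne\lambda(n,n+d(\lambda)-(m\vee n))$, where $(m\vee n)_i=\max\{m_i,n_i\}$. *)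

From Stdlib Require List.
From mathcomp Require Import all_boot.
Set Implicit Arguments. Unset Strict Implicit. Unset Printing Implicit Defensive.

Definition deg_t (k : nat) := {ffun 'I_k -> nat}.
Definition dzero (k : nat) : deg_t k := [ffun => 0%N].
Definition dadd k (m n : deg_t k) : deg_t k := [ffun i => (m i + n i)%N].
Definition dsub k (m n : deg_t k) : deg_t k := [ffun i => (m i - n i)%N].
Definition dmax k (m n : deg_t k) : deg_t k := [ffun i => maxn (m i) (n i)].
Definition dle k (m n : deg_t k) : Prop := forall i, (m i <= n i)%N.

(* Objects = vertices,
   morphisms = paths; composition [comp a b] = "a b" is defined when
   [src a = rng b] (total function, axioms only for composable pairs). *)
Record kgraph (k : nat) := KGraph {
  vert : Type;
  path : Type;
  rng : path -> vert;
  src : path -> vert;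
  idp : vert -> path;
  comp : path -> path -> path;
  deg : path -> deg_t k;
  rng_idp : forall v, rng (idp v) = v;
  src_idp : forall v, src (idp v) = v;
  rng_comp : forall a b, src a = rng b -> rng (comp a b) = rng a;
  src_comp : forall a b, src a = rng b -> src (comp a b) = src b;
  comp_idl : forall a, comp (idp (rng a)) a = a;
  comp_idr : forall a, comp a (idp (src a)) = a;
  compA : forall a b c, src a = rng b -> src b = rng c ->
            comp (comp a b) c = comp a (comp b c);
  deg_idp : forall v, deg (idp v) = dzero k;
  deg_comp : forall a b, src a = rng b -> deg (comp a b) = dadd (deg a) (deg b);
  unique_factorisation : forall (l : path) (m n : deg_t k),
      deg l = dadd m n ->
      exists mu nu, (src mu = rng nu /\ comp mu nu = l /\ deg mu = m /\ deg nu = n)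
        /\ forall mu' nu', src mu' = rng nu' -> comp mu' nu' = l ->
             deg mu' = m -> deg nu' = n -> mu' = mu /\ nu' = nu;
  countable_paths : exists f : path -> nat, injective f
}.
Arguments rng {k} _ _.  Arguments src {k} _ _.  Arguments idp {k} _ _.
Arguments comp {k} _ _ _.  Arguments deg {k} _ _.

Definition row_finite k (L : kgraph k) : Prop :=
  forall (v : vert L) (n : deg_t k),
    exists s : list (path L), forall l, rng L l = v -> deg L l = n -> List.In l s.

Record kgraph_morphism k (L G : kgraph k) := KMorph {
  pv : vert L -> vert G;
  pp : path L -> path G;
  pp_rng : forall l, rng G (pp l) = pv (rng L l);
  pp_src : forall l, src G (pp l) = pv (src L l);
  pp_idp : forall v, pp (idp L v) = idp G (pv v);
  pp_comp : forall a b, src L a = rng L b -> pp (comp L a b) = comp G (pp a) (pp b);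
  pp_deg : forall l, deg G (pp l) = deg L l
}.
Arguments pv {k L G} _ _.  Arguments pp {k L G} _ _.

Definition surjective_morphism k (L G : kgraph k) (p : kgraph_morphism L G) : Prop :=
  forall g : path G, exists l : path L, pp p l = g.

Definition r_path_lifting k (L G : kgraph k) (p : kgraph_morphism L G) : Prop :=
  forall (v : vert L) (g : path G), rng G g = pv p v ->
    exists l : path L, rng L l = v /\ pp p l = g.

(* [segment L l m n a] : a = l(m, n), i.e. l = l' a l'' with d(l') = m,
   d(a) = n - m  (for m <= n <= d(l)). *)
Definition segment k (L : kgraph k) (l : path L) (m n : deg_t k) (a : path L) : Prop :=
  exists l' l'', src L l' = rng L a /\ src L a = rng L l'' /\
    deg L l' = m /\ deg L a = dsub n m /\ comp L (comp L l' a) l'' = l.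

Definition aperiodic k (L : kgraph k) : Prop :=
  forall (v : vert L) (m n : deg_t k), m <> n ->
    exists l : path L, rng L l = v /\ dle (dmax m n) (deg L l) /\
      exists a b : path L,
        segment l m (dadd m (dsub (deg L l) (dmax m n))) a /\
        segment l n (dadd n (dsub (deg L l) (dmax m n))) b /\
        a <> b.

(* Given v in Lambda and m <> n, lift a path witnessing aperiodicity of Gamma at
   p(v) to a path lambda at v, using r-path lifting.  The morphism p preserves
   degrees and composition, so it maps the segments lambda(m, .) and lambda(n, .)
   to the corresponding segments of p(lambda); by unique factorisation these are
   the segments that differ in Gamma, hence the segments of lambda differ too. *)
From Pilot Require Import Defs.
From mathcomp Require Import all_boot.
From mathcomp Require Import zify.

Lemma dadd_inj {k} (m n1 n2 : deg_t k) : dadd m n1 = dadd m n2 -> n1 = n2.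
Proof.
move=> E; apply/ffunP => i.
by move/ffunP/(_ i): E; rewrite !ffunE => /addnI.
Qed.

Lemma dle_maxl {k} (m n : deg_t k) : dle m (dmax m n).
Proof. by move=> i; rewrite ffunE leq_maxl. Qed.

Lemma dle_maxr {k} (m n : deg_t k) : dle n (dmax m n).
Proof. by move=> i; rewrite ffunE leq_maxr. Qed.

Lemma window_le {k} {m0 M d : deg_t k} :
  dle m0 M -> dle M d ->
  dle m0 (dadd m0 (dsub d M)) /\ dle (dadd m0 (dsub d M)) d.
Proof.
by move=> le_m0 le_M; split => i; move: (le_m0 i) (le_M i); rewrite !ffunE; lia.
Qed.

Section Factorisation.

Context {k : nat} {L : kgraph k}.

Lemma comp_inj {x1 y1 x2 y2 : Defs.path L} :
  src L x1 = rng L y1 -> src L x2 = rng L y2 ->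
  Defs.comp L x1 y1 = Defs.comp L x2 y2 -> deg L x1 = deg L x2 -> x1 = x2 /\ y1 = y2.
Proof.
move=> s1 s2 c dx.
have D1 : deg L (Defs.comp L x1 y1) = dadd (deg L x1) (deg L y1) by rewrite deg_comp.
have dy : deg L y2 = deg L y1.
  by apply: (@dadd_inj _ (deg L x1)); rewrite -D1 c deg_comp // dx.
have [mu [nu [_ uniq_fact]]] := unique_factorisation D1.
have [-> ->] := uniq_fact _ _ s1 erefl erefl erefl.
by have [-> ->] := uniq_fact _ _ s2 (esym c) (esym dx) dy.
Qed.

Lemma segment_unique {l a1 a2 : Defs.path L} {m n : deg_t k} :
  segment l m n a1 -> segment l m n a2 -> a1 = a2.
Proof.
move=> [x1 [y1 [s1 [t1 [d1 [e1 c1]]]]]] [x2 [y2 [s2 [t2 [d2 [e2 c2]]]]]].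
have [c _] : Defs.comp L x1 a1 = Defs.comp L x2 a2 /\ y1 = y2.
  apply: comp_inj; rewrite ?src_comp ?c1 ?c2 //.
  by rewrite !deg_comp // d1 d2 e1 e2.
by have [_ ->] := comp_inj s1 s2 c (etrans d1 (esym d2)).
Qed.

Lemma segment_exists (l : Defs.path L) {m n : deg_t k} :
  dle m n -> dle n (deg L l) -> exists a, segment l m n a.
Proof.
move=> le_mn le_n.
have E : deg L l = dadd (dadd m (dsub n m)) (dsub (deg L l) n).
  apply/ffunP => i; rewrite !ffunE.
  by move: (le_mn i) (le_n i); move: (m i) (n i) (deg L l i) => a b c; lia.
have [x [y [[sx [cx [dx _]]] _]]] := unique_factorisation E.
have [l' [a [[sa [ca [dl da]]] _]]] := unique_factorisation dx.
exists a, l', y; split=> //; split; last by rewrite ca.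
by rewrite -sx -ca src_comp.
Qed.

Lemma segment_window_exists {l : Defs.path L} {m0 M : deg_t k} :
  dle m0 M -> dle M (deg L l) ->
  exists a, segment l m0 (dadd m0 (dsub (deg L l) M)) a.
Proof. by move=> le_m0 le_M; have [] := window_le le_m0 le_M; apply: segment_exists. Qed.

End Factorisation.

Lemma morphism_segment {k} {L G : kgraph k} (p : kgraph_morphism L G)
    {l a : Defs.path L} {m n : deg_t k} :
  segment l m n a -> segment (pp p l) m n (pp p a).
Proof.
move=> [x [y [s [t [d [e c]]]]]].
exists (pp p x), (pp p y); rewrite !pp_src !pp_rng !pp_deg s t d e; do 4 split => //.
by rewrite -!pp_comp ?c // src_comp.
Qed.

Theorem theorem3p3 (k : nat) (L G : kgraph k) (p : kgraph_morphism L G) :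
  row_finite L -> row_finite G ->
  surjective_morphism p -> r_path_lifting p ->
  aperiodic G -> aperiodic L.
Proof.
move=> _ _ _ lift apG v m n ne_mn.
have [g [rg [le_g [a' [b' [sa' [sb' ne_ab']]]]]]] := apG (pv p v) m n ne_mn.
have [l [rl pl]] := lift v g rg.
have dl : deg G g = deg L l by rewrite -pl pp_deg.
rewrite dl in le_g sa' sb'.
have [a sa] := segment_window_exists (dle_maxl m n) le_g.
have [b sb] := segment_window_exists (dle_maxr m n) le_g.
exists l; split => //; split => //; exists a, b; do 2 split => //.
move=> eq_ab; apply: ne_ab'.
have pa := morphism_segment p sa; have pb := morphism_segment p sb.
rewrite pl in pa pb.
by rewrite (segment_unique sa' pa) (segment_unique sb' pb) eq_ab.
Qed.
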